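(* Let $R>0$ and $\alpha_0\in(0,\frac{3}{4R})$, and define $\{\alpha_k\}_{k\ge0}$ by $$\alpha_{k+1}=\alpha_k\left(1-\frac{1}{(k+1)(k+3)}\,\frac{\alpha_k^2R^2}{1-\alpha_k^2R^2}\right),\qquad k\ge 0.$$ Then $\{\alpha_k\}_{k\ge0}$ is well defined, monotonically decreasing, and converges to a positive limit. In particular, when $\alpha_0=\frac{0.618}{R}$, one has $\lim_{k\to\infty}\alpha_k\approx\frac{0.437}{R}$. *)

From Stdlib Require Import Reals.
Open Scope R_scope.

Fixpoint alpha_seq (Rc a0 : R) (k : nat) : R :=
  match k with
  | O => a0
  | S j =>
      let a := alpha_seq Rc a0 j in
      a * (1 - / ((INR j + 1) * (INR j + 3)) *
               ((a ^ 2 * Rc ^ 2) / (1 - a ^ 2 * Rc ^ 2)))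
  end.

From Stdlib Require Import Reals Lra QArith Qreals Qround.
Open Scope R_scope.

(* Scaling x_k = R alpha_k reduces everything to R = 1, where, as long as 0 <= x_k < 1,
   x_{k+1} = x_k - drift x_k / ((k+1)(k+3)) with drift u = u^3 / (1 - u^2) increasing
   on [0, 1).  The weights 1 / ((k+1)(k+3)) telescope, their tail from k summing to
   h_k = (1/(k+1) + 1/(k+2)) / 2, so starting from x_N the sequence loses at most
   drift(x_N) h_N.  For N = 0 this is (3/4) x_0^3 / (1 - x_0^2) < x_0 because
   x_0^2 < 9/16 < 4/7: the sequence stays in (0, x_0], decreases, and its limit is
   positive.  For x_0 = 0.618, rational interval arithmetic rounded outwards to 10^-12
   encloses x_20, and the two tail estimates from N = 20 (with N + 80 = 100 for the
   upper one) confine the limit to [0.436, 0.438]. *)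

Definition denom (k : nat) : R := (INR k + 1) * (INR k + 3).

Definition drift (u : R) : R := u ^ 3 / (1 - u ^ 2).

(* [tail_weight k] is the sum of [/ denom j] over [j >= k]. *)
Definition tail_weight (k : nat) : R := / 2 * (/ (INR k + 1) + / (INR k + 2)).

Lemma Un_cv_const (c : R) : Un_cv (fun _ => c) c.
Proof.
  intros eps Heps. exists 0%nat. intros n _.
  unfold R_dist. rewrite Rminus_diag, Rabs_R0. exact Heps.
Qed.

Lemma Un_cv_scal (c l : R) (u : nat -> R) : Un_cv u l -> Un_cv (fun n => c * u n) (c * l).
Proof. apply CV_mult, Un_cv_const. Qed.

Lemma alpha_seq_scale (Rc a0 : R) (k : nat) :
  Rc * alpha_seq Rc a0 k = alpha_seq 1 (Rc * a0) k.
Proof.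
  induction k as [|k IH]; [reflexivity|].
  cbn [alpha_seq]. rewrite <- IH.
  set (a := alpha_seq Rc a0 k).
  replace ((Rc * a) ^ 2 * 1 ^ 2) with (a ^ 2 * Rc ^ 2) by ring.
  ring.
Qed.

Lemma Un_cv_alpha_seq_unit (Rc a0 L : R) :
  Un_cv (alpha_seq Rc a0) L -> Un_cv (alpha_seq 1 (Rc * a0)) (Rc * L).
Proof.
  intros HL. apply Un_cv_ext with (un := fun k => Rc * alpha_seq Rc a0 k).
  - intros k. apply alpha_seq_scale.
  - apply Un_cv_scal, HL.
Qed.

Lemma Un_cv_alpha_seq_of_unit (Rc a0 L : R) : 0 < Rc ->
  Un_cv (alpha_seq 1 (Rc * a0)) L -> Un_cv (alpha_seq Rc a0) (/ Rc * L).
Proof.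
  intros HRc HL. apply Un_cv_ext with (un := fun k => / Rc * alpha_seq 1 (Rc * a0) k).
  - intros k. rewrite <- alpha_seq_scale. field. lra.
  - apply Un_cv_scal, HL.
Qed.

Lemma denom_gt0 (k : nat) : 0 < denom k.
Proof. unfold denom. pose proof (pos_INR k). nra. Qed.

Lemma tail_weight_ge0 (k : nat) : 0 <= tail_weight k.
Proof.
  unfold tail_weight. pose proof (pos_INR k).
  assert (0 < / (INR k + 1)) by (apply Rinv_0_lt_compat; lra).
  assert (0 < / (INR k + 2)) by (apply Rinv_0_lt_compat; lra).
  lra.
Qed.

Lemma tail_weight_S (k : nat) : tail_weight (S k) = tail_weight k - / denom k.
Proof.
  unfold tail_weight, denom. rewrite S_INR. pose proof (pos_INR k).
  field. lra.
Qed.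

Lemma drift_ge0 (u : R) : 0 <= u < 1 -> 0 <= drift u.
Proof.
  intros Hu. unfold drift, Rdiv. apply Rmult_le_pos; [apply pow_le; lra|].
  left. apply Rinv_0_lt_compat. nra.
Qed.

Lemma drift_le (a b : R) : 0 <= a -> a <= b -> b < 1 -> drift a <= drift b.
Proof.
  intros Ha Hab Hb. unfold drift.
  assert (0 < 1 - a ^ 2) by nra. assert (0 < 1 - b ^ 2) by nra.
  apply Rmult_le_reg_r with ((1 - a ^ 2) * (1 - b ^ 2)); [nra|].
  replace (a ^ 3 / (1 - a ^ 2) * ((1 - a ^ 2) * (1 - b ^ 2))) with (a ^ 3 * (1 - b ^ 2))
    by (field; lra).
  replace (b ^ 3 / (1 - b ^ 2) * ((1 - a ^ 2) * (1 - b ^ 2))) with (b ^ 3 * (1 - a ^ 2))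
    by (field; lra).
  (* b^3 (1 - a^2) - a^3 (1 - b^2) = (b - a) (a^2 + a b + b^2 - a^2 b^2) *)
  assert (a * a * (b * b) <= a * a) by (rewrite <- (Rmult_1_r (a * a)) at 2;
    apply Rmult_le_compat_l; nra).
  assert (0 <= (b - a) * (b * b + a * b + a * a - a * a * (b * b))) by
    (apply Rmult_le_pos; nra).
  nra.
Qed.

Section UnitRadius.

Variable x0 : R.

Local Notation x := (alpha_seq 1 x0).

Lemma alpha1_S (k : nat) : x k ^ 2 <> 1 -> x (S k) = x k - drift (x k) / denom k.
Proof.
  intros Hx. cbn [alpha_seq]. unfold drift, denom.
  pose proof (pos_INR k).
  assert (1 - x k ^ 2 <> 0) by lra.
  field. split; [lra | split; lra].
Qed.

Lemma alpha1_S_bounds (k : nat) (l u : R) : 0 <= l -> l <= x k <= u -> u < 1 ->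
  x k - drift u / denom k <= x (S k) <= x k - drift l / denom k.
Proof.
  intros Hl Hx Hu. rewrite alpha1_S by nra.
  pose proof (drift_le l (x k) Hl (proj1 Hx) ltac:(lra)).
  pose proof (drift_le (x k) u ltac:(lra) (proj2 Hx) Hu).
  pose proof (denom_gt0 k).
  unfold Rdiv. split; apply Rplus_le_compat_l, Ropp_le_contravar;
    apply Rmult_le_compat_r; try (left; apply Rinv_0_lt_compat); lra.
Qed.

Lemma alpha1_S_le (k : nat) : 0 <= x k < 1 -> x (S k) <= x k.
Proof.
  intros Hx. destruct (alpha1_S_bounds k (x k) (x k)) as [_ Hup]; try lra.
  assert (0 <= drift (x k) / denom k).
  { unfold Rdiv. apply Rmult_le_pos; [apply drift_ge0; lra|].
    left. apply Rinv_0_lt_compat, denom_gt0. }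
  lra.
Qed.

Lemma alpha1_tail_lower (N : nat) (b U : R) : 0 <= b -> b <= x N <= U -> U < 1 ->
  0 <= b - drift U * tail_weight N ->
  forall n, b - drift U * (tail_weight N - tail_weight (N + n)) <= x (N + n) <= x N.
Proof.
  intros Hb HxN HU Hpos n. pose proof (drift_ge0 U ltac:(lra)) as HdU.
  induction n as [|n IH].
  { rewrite Nat.add_0_r. lra. }
  pose proof (tail_weight_ge0 (N + n)).
  assert (0 <= x (N + n)) by nra.
  destruct (alpha1_S_bounds (N + n) (x (N + n)) U) as [Hlow _]; try lra.
  pose proof (alpha1_S_le (N + n) ltac:(lra)).
  rewrite Nat.add_succ_r, tail_weight_S. unfold Rdiv in *. nra.
Qed.

Lemma alpha1_tail_upper (N : nat) (m : R) : 0 <= m -> (forall n, m <= x (N + n) < 1) ->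
  forall n, x (N + n) <= x N - drift m * (tail_weight N - tail_weight (N + n)).
Proof.
  intros Hm Hrange n. induction n as [|n IH].
  { rewrite Nat.add_0_r. lra. }
  destruct (Hrange n) as [Hmx Hx1].
  destruct (alpha1_S_bounds (N + n) m (x (N + n))) as [_ Hup]; try lra.
  rewrite Nat.add_succ_r, tail_weight_S. unfold Rdiv in *. nra.
Qed.

Hypothesis x0_range : 0 < x0 < 3 / 4.

Lemma alpha1_floor_gt0 : 0 < x0 - drift x0 * tail_weight 0.
Proof.
  unfold drift, tail_weight. simpl INR.
  replace (x0 - x0 ^ 3 / (1 - x0 ^ 2) * (/ 2 * (/ (0 + 1) + / (0 + 2))))
    with (x0 * (1 - 7 / 4 * x0 ^ 2) / (1 - x0 ^ 2)) by (field; nra).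
  apply Rdiv_lt_0_compat; [apply Rmult_lt_0_compat|]; nra.
Qed.

Lemma alpha1_bounds (n : nat) : x0 - drift x0 * tail_weight 0 <= x n <= x0.
Proof.
  pose proof alpha1_floor_gt0.
  destruct (alpha1_tail_lower 0 x0 x0 ltac:(lra) ltac:(simpl; lra) ltac:(lra)
    ltac:(lra) n) as [Hlow Hup].
  pose proof (tail_weight_ge0 n). pose proof (drift_ge0 x0 ltac:(lra)).
  simpl in Hlow, Hup. nra.
Qed.

Lemma alpha1_range (n : nat) : 0 < x n < 1.
Proof. pose proof alpha1_floor_gt0. pose proof (alpha1_bounds n). lra. Qed.

Lemma alpha1_decreasing : Un_decreasing x.
Proof. intros n. pose proof (alpha1_range n). apply alpha1_S_le. lra. Qed.

Lemma alpha1_cv_pos : exists L, 0 < L /\ Un_cv x L.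
Proof.
  destruct (decreasing_cv x alpha1_decreasing) as [L HL].
  { exists 0. intros y [n ->]. unfold opp_seq. pose proof (alpha1_range n). lra. }
  exists L. split; [|exact HL].
  apply Rlt_le_trans with (1 := alpha1_floor_gt0).
  apply Rle_cv_lim with (Un := fun _ => x0 - drift x0 * tail_weight 0) (Vn := x);
    [apply alpha1_bounds | apply Un_cv_const | exact HL].
Qed.

End UnitRadius.

Open Scope Q_scope.

Definition denomQ (k : nat) : Q := inject_Z (Z.of_nat ((k + 1) * (k + 3))).

Definition driftQ (u : Q) : Q := u * u * u / (1 - u * u).

Definition tail_weightQ (k : nat) : Q :=
  (1 # 2) * (1 / inject_Z (Z.of_nat (k + 1)) + 1 / inject_Z (Z.of_nat (k + 2))).

Definition grid : Q := inject_Z (10 ^ 12).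

Definition round_down (q : Q) : Q := inject_Z (Qfloor (q * grid)) / grid.

Definition round_up (q : Q) : Q := inject_Z (Qceiling (q * grid)) / grid.

Definition valid (I : Q * Q) : bool := Qle_bool 0 (fst I) && negb (Qle_bool 1 (snd I)).

Definition refine (k : nat) (I : Q * Q) : Q * Q :=
  (round_down (fst I - driftQ (snd I) / denomQ k),
   round_up (snd I - driftQ (fst I) / denomQ k)).

Fixpoint enclose (k n : nat) (I : Q * Q) : option (Q * Q) :=
  match n with
  | O => Some I
  | S n => if valid I then enclose (S k) n (refine k I) else None
  end.

Close Scope Q_scope.

Lemma Q2R_of_nat (n : nat) : Q2R (inject_Z (Z.of_nat n)) = INR n.
Proof. unfold Q2R. simpl. rewrite INR_IZR_INZ. field. Qed.

Lemma Q2R_0 : Q2R 0 = 0.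
Proof. unfold Q2R. simpl. ring. Qed.

Lemma Q2R_neq0 (q : Q) : Q2R q <> 0 -> ~ (q == 0)%Q.
Proof. intros Hq E. apply Hq. rewrite (Qeq_eqR _ _ E). apply Q2R_0. Qed.

Lemma Q2R_1 : Q2R 1 = 1.
Proof. unfold Q2R. simpl. field. Qed.

Lemma Q2R_denomQ (k : nat) : Q2R (denomQ k) = denom k.
Proof.
  unfold denomQ, denom. rewrite Q2R_of_nat, mult_INR, !plus_INR. simpl. ring.
Qed.

Lemma Q2R_driftQ (u : Q) : Q2R u ^ 2 <> 1 -> Q2R (driftQ u) = drift (Q2R u).
Proof.
  intros Hu. unfold driftQ, drift.
  assert (Hd : Q2R (1 - u * u) <> 0)
    by (rewrite Q2R_minus, Q2R_mult, Q2R_1; simpl in Hu; lra).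
  rewrite Q2R_div by (apply Q2R_neq0; exact Hd).
  rewrite Q2R_minus, !Q2R_mult, Q2R_1 in *. simpl. field. simpl in Hu. lra.
Qed.

Lemma Q2R_tail_weightQ (k : nat) : Q2R (tail_weightQ k) = tail_weight k.
Proof.
  unfold tail_weightQ, tail_weight. pose proof (pos_INR k).
  assert (E1 : Q2R (inject_Z (Z.of_nat (k + 1))) = INR k + 1)
    by (rewrite Q2R_of_nat, plus_INR; simpl; ring).
  assert (E2 : Q2R (inject_Z (Z.of_nat (k + 2))) = INR k + 2)
    by (rewrite Q2R_of_nat, plus_INR; simpl; ring).
  rewrite Q2R_mult, Q2R_plus, !Q2R_div by (apply Q2R_neq0; rewrite ?E1, ?E2; lra).
  rewrite E1, E2, Q2R_1. unfold Q2R at 1. simpl. field. lra.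
Qed.

Lemma round_down_le (q : Q) : (round_down q <= q)%Q.
Proof. apply Qle_shift_div_r; [reflexivity | apply Qfloor_le]. Qed.

Lemma round_up_ge (q : Q) : (q <= round_up q)%Q.
Proof. apply Qle_shift_div_l; [reflexivity | apply Qle_ceiling]. Qed.

Lemma valid_spec (I : Q * Q) : valid I = true -> 0 <= Q2R (fst I) /\ Q2R (snd I) < 1.
Proof.
  unfold valid. intros H. apply andb_prop in H as [Hl Hu].
  apply Qle_bool_iff, Qle_Rle in Hl. rewrite Q2R_0 in Hl.
  split; [exact Hl|]. rewrite <- Q2R_1. apply Qlt_Rlt, Qnot_le_lt.
  intros E. apply Qle_bool_iff in E. rewrite E in Hu. discriminate.
Qed.

Definition in_interval (r : R) (I : Q * Q) : Prop := Q2R (fst I) <= r <= Q2R (snd I).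

Lemma refine_sound (x0 : R) (k : nat) (I : Q * Q) : valid I = true ->
  in_interval (alpha_seq 1 x0 k) I -> in_interval (alpha_seq 1 x0 (S k)) (refine k I).
Proof.
  destruct I as [l u]. unfold in_interval, refine. cbn [fst snd].
  intros Hvalid Hx. apply valid_spec in Hvalid as [Hl Hu]. cbn [fst snd] in Hl, Hu.
  pose proof (denom_gt0 k).
  assert (Hc : ~ (denomQ k == 0)%Q) by (apply Q2R_neq0; rewrite Q2R_denomQ; lra).
  pose proof (Qle_Rle _ _ (round_down_le (l - driftQ u / denomQ k))) as Hdown.
  pose proof (Qle_Rle _ _ (round_up_ge (u - driftQ l / denomQ k))) as Hup.
  rewrite Q2R_minus, Q2R_div, Q2R_denomQ, Q2R_driftQ in Hdown, Hup by (auto; nra).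
  pose proof (alpha1_S_bounds x0 k (Q2R l) (Q2R u) Hl Hx Hu).
  lra.
Qed.

Lemma enclose_sound (x0 : R) (n k : nat) (I J : Q * Q) : enclose k n I = Some J ->
  in_interval (alpha_seq 1 x0 k) I -> in_interval (alpha_seq 1 x0 (k + n)) J.
Proof.
  revert k I. induction n as [|n IH]; intros k I HJ Hx; simpl in HJ.
  - injection HJ as <-. rewrite Nat.add_0_r. exact Hx.
  - destruct (valid I) eqn:Hvalid; [|discriminate].
    rewrite Nat.add_succ_r, <- Nat.add_succ_l.
    exact (IH (S k) _ HJ (refine_sound x0 k I Hvalid Hx)).
Qed.

Definition enclosure20 : Q * Q :=
  match enclose 0 20 (618 # 1000, 618 # 1000)%Q with Some J => J | None => (0, 0)%Q end.

Lemma enclose_20 : enclose 0 20 (618 # 1000, 618 # 1000)%Q = Some enclosure20.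
Proof. vm_compute. reflexivity. Qed.

Section GoldenStart.

Local Notation x := (alpha_seq 1 (618 / 1000)).
Local Notation l20 := (Q2R (fst enclosure20)).
Local Notation u20 := (Q2R (snd enclosure20)).

Lemma Q2R_436 : Q2R (436 # 1000) = 436 / 1000.
Proof. unfold Q2R. simpl. lra. Qed.

Lemma alpha1_golden_20 : 0 <= l20 /\ l20 <= x 20 <= u20 /\ u20 < 1.
Proof.
  assert (Hx0 : in_interval (x 0) (618 # 1000, 618 # 1000)%Q)
    by (unfold in_interval, Q2R; cbn [fst snd Qnum Qden alpha_seq]; split; lra).
  pose proof (enclose_sound _ 20 0 _ _ enclose_20 Hx0) as H20.
  assert (Hvalid : valid enclosure20 = true) by (vm_compute; reflexivity).
  apply valid_spec in Hvalid. unfold in_interval in H20. rewrite Nat.add_0_l in H20. lra.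
Qed.

Lemma alpha1_golden_tail_ge (n : nat) : 436 / 1000 <= x (20 + n).
Proof.
  assert (Hcheck : (436 # 1000 <=
      fst enclosure20 - driftQ (snd enclosure20) * tail_weightQ 20)%Q)
    by (apply Qle_bool_iff; vm_compute; reflexivity).
  destruct alpha1_golden_20 as (Hl & H20 & Hu).
  apply Qle_Rle in Hcheck.
  rewrite Q2R_minus, Q2R_mult, Q2R_driftQ, Q2R_tail_weightQ, Q2R_436 in Hcheck by nra.
  pose proof (drift_ge0 u20 ltac:(lra)). pose proof (tail_weight_ge0 (20 + n)).
  destruct (alpha1_tail_lower (618 / 1000) 20 l20 u20 ltac:(lra) ltac:(lra) Hu ltac:(lra) n)
    as [Hlow _].
  nra.
Qed.

Lemma alpha1_golden_limit (L : R) : Un_cv x L -> 436 / 1000 <= L <= 438 / 1000.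
Proof.
  intros HL. split.
  - apply Rle_cv_lim with (Un := fun _ => 436 / 1000) (Vn := fun n => x (n + 20)).
    + intros n. rewrite Nat.add_comm. apply alpha1_golden_tail_ge.
    + apply Un_cv_const.
    + apply CV_shift', HL.
  - assert (Hcheck : (snd enclosure20 - driftQ (436 # 1000)
        * (tail_weightQ 20 - tail_weightQ 100) <= 438 # 1000)%Q)
      by (apply Qle_bool_iff; vm_compute; reflexivity).
    apply Qle_Rle in Hcheck.
    rewrite Q2R_minus, Q2R_mult, Q2R_minus, Q2R_driftQ, !Q2R_tail_weightQ, Q2R_436
      in Hcheck by (rewrite Q2R_436; lra).
    assert (Hrange : forall n, 436 / 1000 <= x (20 + n) < 1).
    { intros n. split; [apply alpha1_golden_tail_ge|]. apply alpha1_range. lra. }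
    pose proof (alpha1_tail_upper (618 / 1000) 20 (436 / 1000) ltac:(lra) Hrange 80)
      as H100.
    pose proof (decreasing_ineq x L (alpha1_decreasing (618 / 1000) ltac:(lra)) HL 100).
    destruct alpha1_golden_20. change (20 + 80)%nat with 100%nat in H100. lra.
Qed.

End GoldenStart.

Theorem lemma1 :
  (forall (Rc a0 : R), 0 < Rc -> 0 < a0 -> a0 < 3 / (4 * Rc) ->
     (* well defined: the denominators 1 - alpha_k^2 R^2 never vanish *)
     (forall k : nat, 1 - (alpha_seq Rc a0 k) ^ 2 * Rc ^ 2 <> 0) /\
     (* monotonically decreasing *)
     (forall k : nat, alpha_seq Rc a0 (S k) <= alpha_seq Rc a0 k) /\
     (* converges to a positive limit *)
     (exists L : R, 0 < L /\ Un_cv (alpha_seq Rc a0) L)) /\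
  (forall (Rc L : R), 0 < Rc ->
     Un_cv (alpha_seq Rc ((618 / 1000) / Rc)) L ->
     Rabs (Rc * L - 437 / 1000) <= 1 / 1000).
Proof.
  split.
  - intros Rc a0 HRc Ha0 Ha0R.
    assert (Hx0 : 0 < Rc * a0 < 3 / 4).
    { split; [nra|]. apply Rmult_lt_compat_l with (r := Rc) in Ha0R; [|lra].
      replace (Rc * (3 / (4 * Rc))) with (3 / 4) in Ha0R by (field; lra). lra. }
    split; [|split].
    + intros k. pose proof (alpha1_range _ Hx0 k).
      replace (alpha_seq Rc a0 k ^ 2 * Rc ^ 2) with ((Rc * alpha_seq Rc a0 k) ^ 2) by ring.
      rewrite alpha_seq_scale. nra.
    + intros k. apply Rmult_le_reg_l with Rc; [exact HRc|].
      rewrite !alpha_seq_scale. apply alpha1_decreasing, Hx0.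
    + destruct (alpha1_cv_pos _ Hx0) as (Lx & HLx & Hcv).
      exists (/ Rc * Lx). split.
      * apply Rmult_lt_0_compat; [apply Rinv_0_lt_compat|]; lra.
      * apply Un_cv_alpha_seq_of_unit; assumption.
  - intros Rc L HRc HL.
    apply Un_cv_alpha_seq_unit in HL.
    replace (Rc * (618 / 1000 / Rc)) with (618 / 1000) in HL by (field; lra).
    apply Rabs_le. pose proof (alpha1_golden_limit _ HL). lra.
Qed.
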